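(* Let $r,n\in\mathbb{Z}_{\geq1}$ and $j\in\mathbb{Z}_{\geq0}$. If $j\leq r$, then \[ \left|\omega_{n,r}(j)-\frac{e^{-1/n}}{j!\,n^j}\right|<\frac{1+2^{r-j}}{j!\,n^j\,(r-j)!}. \] If $j>r$, then $\omega_{n,r}(j)=0$.
   Context: $C_n\wr S_r=C_n^r\rtimes S_r$ (with $S_r$ permuting coordinates) acts on $B(n,r)=C_n\times\{1,\dots,r\}$ by $((\zeta_1,\dots,\zeta_r),\pi)\cdot(\zeta,i)=(\zeta_i\zeta,\pi(i))$. For $\sigma\in C_n\wr S_r$, $\mathrm{Fix}(\sigma)$ is its set of fixed points in $B(n,r)$ (its size is divisible by $n$). The distribution $\omega_{n,r}:\mathbb{Z}_{\geq0}\to\mathbb{R}_{\geq0}$ is $\omega_{n,r}(j)=|\{\sigma\in C_n\wr S_r: |\mathrm{Fix}(\sigma)|=jn\}|/|C_n\wr S_r|$. *)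

From mathcomp Require Import all_boot all_fingroup.
From Stdlib Require Import Reals.

Set Implicit Arguments.
Unset Strict Implicit.
Unset Printing Implicit Defensive.

(* The cyclic group C_n is modelled as 'I_n = {0,...,n-1} with addition mod n
   (n >= 1).  Indices {1,...,r} are modelled as 'I_r = {0,...,r-1}.
   An element of C_n wr S_r = C_n^r ⋊ S_r is a pair (zeta, pi) with
   zeta : {ffun 'I_r -> 'I_n} and pi : {perm 'I_r}. *)
Definition wreath (n r : nat) : finType := ({ffun 'I_r -> 'I_n} * {perm 'I_r})%type.

Definition Bset (n r : nat) : finType := ('I_n * 'I_r)%type.

(* The action ((zeta_1..zeta_r), pi) . (zeta, i) = (zeta_i zeta, pi(i)),
   stated pointwise as the fixed-point test: sigma . x = x. *)
Definition acts_fixing (n r : nat) (s : wreath n r) (x : Bset n r) : bool :=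
  let: (z, p) := s in
  let: (c, i) := x in
  (((val (z i) + val c) %% n)%N == val c) && (p i == i).

Definition nfix (n r : nat) (s : wreath n r) : nat :=
  #|[set x : Bset n r | acts_fixing s x]|.

Definition omega (n r j : nat) : R :=
  Rdiv (INR #|[set s : wreath n r | nfix s == (j * n)%N]|) (INR #|wreath n r|).

(* An element sigma = (zeta, pi) of C_n wr S_r fixes (c, i) iff pi fixes i and
   zeta_i = 0, so |Fix sigma| = n |F(sigma)| for a set F(sigma) of indices.
   Counting the sigma with K <= F(sigma) gives n^(r-k) (r-k)! for |K| = k, so the
   k-th binomial moment of |F| is 1/(k! n^k) for k <= r.  Binomial inversion turns
   these moments into P(|F| = j) = (1/(j! n^j)) sum_(i <= r-j) (-1/n)^i / i!, a
   truncation of the exponential series of e^(-1/n), whose alternating tail is at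
   most 1/(r-j+1)!, well within the claimed bound. *)

From Stdlib Require Import Reals Factorial Lra Lia.
From mathcomp Require all_boot all_fingroup all_algebra zify ring Rstruct.

(* MathComp is imported only inside this section, because the statement of
   mainTheorem4 uses the Peano orders on nat. *)
Section WreathFixedPoints.
Import all_boot all_fingroup all_algebra zify ring Rstruct GRing.Theory Num.Theory.

Lemma modn_addl_eq (n a c : nat) : c < n -> ((a + c) %% n == c) = (a %% n == 0).
Proof. by move=> ltcn; rewrite -{2}(modn_small ltcn) -{2}(add0n c) eqn_modDr mod0n. Qed.

Lemma ffactD (m j i : nat) : m ^_ (j + i) = m ^_ j * (m - j) ^_ i.
Proof.
rewrite !ffact_prod big_split_ord /=; congr (_ * _).
by apply: eq_bigr => l _; rewrite subnDA.
Qed.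

Lemma bin_mul_sub (m j i : nat) : 'C(j + i, j) * 'C(m, j + i) = 'C(m, j) * 'C(m - j, i).
Proof.
have lhs : 'C(j + i, j) * 'C(m, j + i) * (j`! * i`!) = m ^_ (j + i).
  have := bin_fact (leq_addr i j); rewrite addKn => fact_ji.
  by rewrite mulnAC fact_ji mulnC bin_ffact.
have rhs : 'C(m, j) * 'C(m - j, i) * (j`! * i`!) = m ^_ (j + i).
  by rewrite mulnACA !bin_ffact ffactD.
by apply/eqP; rewrite -(eqn_pmul2r (_ : 0 < j`! * i`!)) ?muln_gt0 ?fact_gt0 // lhs rhs.
Qed.

Variables n r : nat.

Definition fixed_indices (s : wreath n r) : {set 'I_r} :=
  [set i | (s.2 i == i) && (val (s.1 i) == 0)].

Lemma nfixE (s : wreath n r) : nfix s = n * #|fixed_indices s|.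
Proof.
rewrite /nfix; have -> : [set x | acts_fixing s x] = setX [set: 'I_n] (fixed_indices s).
  apply/setP => -[c i]; case: s => z p; rewrite !inE /acts_fixing /=.
  by rewrite modn_addl_eq // modn_small // andbC.
by rewrite cardsX cardsT card_ord.
Qed.

Lemma card_wreath : #|wreath n r| = n ^ r * r`!.
Proof. by rewrite card_prod card_ffun card_Sn !card_ord. Qed.

Hypothesis n_gt0 : 0 < n.

Lemma nfix_eqE (s : wreath n r) (j : nat) : (nfix s == j * n) = (#|fixed_indices s| == j).
Proof. by rewrite nfixE mulnC eqn_pmul2r. Qed.

Lemma subset_fixed_indicesE (K : {set 'I_r}) (z : {ffun 'I_r -> 'I_n}) (p : {perm 'I_r}) :
  (K \subset fixed_indices (z, p)) =
  (z \in pffun_on (Ordinal n_gt0) (~: K) predT) && perm_on (~: K) p.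
Proof.
apply/subsetP/andP => [K_fixed | [/pffun_onP[z_supp _] p_on] i iK]; last first.
  rewrite inE /= (out_perm p_on) ?inE ?iK ?eqxx //=.
  have /negPn/eqP -> // : ~~ (z i != Ordinal n_gt0).
  by apply: contraL iK => zi; have := subsetP z_supp i; rewrite !inE; apply.
have fixed_on i : i \in K -> (p i == i) && (val (z i) == 0) by move/K_fixed; rewrite inE.
split.
  apply/pffun_onP; split => //; apply/subsetP => i; rewrite !inE; apply: contra => iK.
  by have /andP[_ /eqP zi0] := fixed_on i iK; apply/eqP/val_inj.
by apply/subsetP => i; rewrite !inE; apply: contra => iK; have /andP[] := fixed_on i iK.
Qed.

Lemma card_subset_fixed_indices (K : {set 'I_r}) :
  #|[set s : wreath n r | K \subset fixed_indices s]| = n ^ (r - #|K|) * (r - #|K|)`!.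
Proof.
have -> : [set s : wreath n r | K \subset fixed_indices s] =
  setX [set z in pffun_on (Ordinal n_gt0) (~: K) predT] [set p in perm_on (~: K)].
  by apply/setP => -[z p]; rewrite !inE subset_fixed_indicesE.
by rewrite cardsX !cardsE card_pffun_on card_perm cardsCs setCK !card_ord.
Qed.

Lemma sum_bin_fixed_indices (k : nat) : k <= r ->
  \sum_(s : wreath n r) 'C(#|fixed_indices s|, k) * (k`! * n ^ k) = #|wreath n r|.
Proof.
move=> le_kr.
have double_count :
    \sum_(s : wreath n r) 'C(#|fixed_indices s|, k) = 'C(r, k) * (n ^ (r - k) * (r - k)`!).
  transitivity (\sum_(K : {set 'I_r} | #|K| == k)
                  \sum_(s : wreath n r) (K \subset fixed_indices s : nat)); last first.
    rewrite -[r in 'C(r, k)]card_ord -card_draws -sum_nat_cond_const.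
    apply: eq_bigr => K /eqP <-.
    rewrite -card_subset_fixed_indices -sum1_card [RHS]big_mkcond.
    by apply: eq_bigr => s; rewrite inE.
  rewrite exchange_big; apply: eq_bigr => s _.
  rewrite -cards_draws -sum1_card big_mkcond [RHS]big_mkcond /=.
  by apply: eq_bigr => K _; rewrite inE; case: (_ \subset _); case: (_ == k).
rewrite -big_distrl /= double_count card_wreath -(bin_fact le_kr).
have -> : n ^ r = n ^ (r - k) * n ^ k by rewrite -expnD subnK.
ring.
Qed.

Local Open Scope ring_scope.

Lemma sum_alt_bin_delta (R : pzRingType) (m j N : nat) : (m <= j + N)%N ->
  \sum_(i < N.+1) (-1) ^+ i * ('C(j + i, j) * 'C(m, j + i))%:R = (m == j)%:R :> R.
Proof.
move=> le_m.
under eq_bigr => i _ do rewrite bin_mul_sub mulnC natrM mulrA !mulr_natr.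
rewrite sumrMnl.
have [lt_mj | le_jm] := ltnP m j.
  by rewrite bin_small // mulr0n (ltn_eqF lt_mj).
have sum_trunc : \sum_(i < N.+1) (-1) ^+ i *+ 'C(m - j, i) = (-1 + 1) ^+ (m - j) :> R.
  have le_mjN : ((m - j).+1 <= N.+1)%N by lia.
  rewrite exprD1n (big_ord_widen _ (fun i => (-1) ^+ i *+ 'C(m - j, i) : R) le_mjN).
  rewrite [RHS]big_mkcond; apply: eq_bigr => i _.
  by case: ltnP => // lt_i; rewrite bin_small // mulr0n.
rewrite sum_trunc addNr expr0n.
have [-> | ne_mj] := eqVneq m j; first by rewrite subnn binn.
by rewrite (_ : (m - j == 0)%N = false) ?mul0rn //; lia.
Qed.

Lemma mean_bin_fixed_indices (F : numFieldType) (k : nat) : (k <= r)%N ->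
  (\sum_(s : wreath n r) 'C(#|fixed_indices s|, k))%:R / #|wreath n r|%:R
    = (k`!%:R * n%:R ^+ k)^-1 :> F.
Proof.
move=> le_kr; set S := \sum_(s : wreath n r) _ : nat.
have S_mul : (S * (k`! * n ^ k))%N = #|wreath n r| by rewrite big_distrl sum_bin_fixed_indices.
have : (0 < S * (k`! * n ^ k))%N by rewrite S_mul card_wreath muln_gt0 expn_gt0 n_gt0 fact_gt0.
rewrite muln_gt0 => /andP[S_gt0 _].
by rewrite -S_mul !natrM natrX invfM mulrA divff ?mul1r // pnatr_eq0 -lt0n.
Qed.

Lemma ratio_card_fixed_indices_eq (F : numFieldType) (j : nat) : (j <= r)%N ->
  #|[set s : wreath n r | #|fixed_indices s| == j]|%:R / #|wreath n r|%:R
    = (j`!%:R * n%:R ^+ j)^-1 * \sum_(i < (r - j).+1) (-1) ^+ i / (i`!%:R * n%:R ^+ i) :> F.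
Proof.
move=> le_jr.
have indicator : #|[set s : wreath n r | #|fixed_indices s| == j]|%:R =
    \sum_(s : wreath n r) \sum_(i < (r - j).+1)
      (-1) ^+ i * ('C(j + i, j) * 'C(#|fixed_indices s|, j + i))%:R :> F.
  rewrite -sum1_card natr_sum big_mkcond; apply: eq_bigr => s _.
  rewrite sum_alt_bin_delta ?inE; first by case: (_ == j).
  by rewrite subnKC // -[r in (_ <= r)%N]card_ord max_card.
rewrite indicator exchange_big mulr_suml mulr_sumr; apply: eq_bigr => i _.
under eq_bigr => s _ do rewrite natrM mulrA.
rewrite -mulr_sumr -natr_sum -!mulrA mean_bin_fixed_indices; last first.
  by have := ltn_ord i; lia.
have := bin_fact (leq_addr i j); rewrite addKn => <-.
rewrite !natrM exprD; field.
by rewrite !expf_neq0 ?pnatr_eq0 -?lt0n ?fact_gt0 ?bin_gt0 ?leq_addr.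
Qed.

Local Open Scope R_scope.

Lemma omega_eq0 (j : nat) : (r < j)%N -> omega n r j = 0.
Proof.
move=> lt_rj; rewrite /omega.
have -> : [set s : wreath n r | nfix s == (j * n)%N] = set0.
  apply/setP => s; rewrite !inE nfix_eqE; apply/negbTE/eqP => card_eq.
  by have := max_card (fixed_indices s); rewrite card_ord; lia.
by rewrite cards0 RdivE mul0r.
Qed.

Lemma omega_E1 (j : nat) : (j <= r)%N ->
  omega n r j = E1 (- / INR n) (r - j) / (INR (fact j) * INR n ^ j).
Proof.
move=> le_jr; rewrite /omega.
have -> : #|[set s : wreath n r | nfix s == (j * n)%N]| =
          #|[set s : wreath n r | #|fixed_indices s| == j]|.
  by apply: eq_card => s; rewrite !inE nfix_eqE.
rewrite !INRE RdivE ratio_card_fixed_indices_eq // /E1 sum_f_R0E big_mkord.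
rewrite RdivE RmultE factE RpowE mulrC; congr (_ * _); apply: eq_bigr => i _.
by rewrite !RinvE RoppE INRE RpowE factE (exprNn (n%:R^-1)) exprVn invfM mulrCA.
Qed.
End WreathFixedPoints.

Open Scope R_scope.

Lemma alternated_series_error (U : nat -> R) (l : R) (m : nat) :
  Un_decreasing U -> Un_cv U 0 -> Un_cv (sum_f_R0 (tg_alt U)) l ->
  Rabs (sum_f_R0 (tg_alt U) m - l) <= U (S m).
Proof.
  intros Hdec Hcv0 Hcv.
  assert (Hstep : sum_f_R0 (tg_alt U) (S m) = sum_f_R0 (tg_alt U) m + (-1) ^ S m * U (S m))
    by reflexivity.
  destruct (Nat.Even_or_Odd m) as [[N HN] | [N HN]]; subst m.
  - destruct (alternated_series_ineq U l N Hdec Hcv0 Hcv) as [Hlo Hhi].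
    rewrite Hstep, pow_1_odd in Hlo.
    apply Rabs_le; lra.
  - destruct (alternated_series_ineq U l N Hdec Hcv0 Hcv) as [Hlo _].
    destruct (alternated_series_ineq U l (S N) Hdec Hcv0 Hcv) as [_ Hhi].
    replace (S (2 * N)) with (2 * N + 1)%nat in Hlo by lia.
    replace (2 * S N)%nat with (S (2 * N + 1)) in Hhi by lia.
    rewrite Hstep in Hhi.
    replace ((-1) ^ S (2 * N + 1)) with 1 in Hhi
      by (replace (S (2 * N + 1)) with (2 * S N)%nat by lia; now rewrite pow_1_even).
    apply Rabs_le; lra.
Qed.

Lemma pow_div_fact_decreasing (x : R) :
  0 <= x <= 1 -> Un_decreasing (fun i => x ^ i / INR (fact i)).
Proof.
  intros Hx i; simpl pow.
  rewrite fact_simpl, mult_INR.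
  assert (Hfact : 0 < INR (fact i)) by apply INR_fact_lt_0.
  assert (HSi : 1 <= INR (S i)) by (rewrite S_INR; pose proof (pos_INR i); lra).
  assert (Hxi : 0 <= x ^ i) by (apply pow_le; lra).
  assert (Hinv : 0 < / INR (S i) <= 1).
  { split; [apply Rinv_0_lt_compat; lra|rewrite <- Rinv_1; apply Rinv_le_contravar; lra]. }
  assert (Hterm : 0 <= x ^ i / INR (fact i)).
  { apply Rmult_le_pos; [lra|left; apply Rinv_0_lt_compat; lra]. }
  replace (x * x ^ i / (INR (S i) * INR (fact i)))
    with (x * / INR (S i) * (x ^ i / INR (fact i))) by (field; lra).
  assert (0 <= x * / INR (S i) <= 1) by (split; nra).
  nra.
Qed.

Lemma E1_neg_tg_alt (x : R) (m : nat) :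
  E1 (- x) m = sum_f_R0 (tg_alt (fun i => x ^ i / INR (fact i))) m.
Proof.
  apply sum_eq; intros i _; unfold tg_alt.
  replace (- x) with (-1 * x) by ring; rewrite Rpow_mult_distr.
  unfold Rdiv; ring.
Qed.

Lemma E1_neg_error (x : R) (m : nat) :
  0 <= x <= 1 -> Rabs (E1 (- x) m - exp (- x)) <= x ^ S m / INR (fact (S m)).
Proof.
  intros Hx; rewrite E1_neg_tg_alt.
  apply alternated_series_error.
  - now apply pow_div_fact_decreasing.
  - apply cv_speed_pow_fact.
  - intros eps Heps; destruct (E1_cvg (- x) eps Heps) as [N HN].
    exists N; intros k Hk; rewrite <- E1_neg_tg_alt; now apply HN.
Qed.

Lemma E1_neg_error_lt (x : R) (m : nat) :
  0 <= x <= 1 -> Rabs (E1 (- x) m - exp (- x)) < (1 + 2 ^ m) / INR (fact m).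
Proof.
  intros Hx.
  assert (Hfact : 0 < INR (fact m)) by apply INR_fact_lt_0.
  assert (HfactS : INR (fact m) <= INR (fact (S m)))
    by (apply le_INR, fact_le; lia).
  assert (Hpow : x ^ S m <= 1) by (rewrite <- (pow1 (S m)); apply pow_incr; lra).
  assert (H2m : 0 < 2 ^ m) by (apply pow_lt; lra).
  apply Rle_lt_trans with (x ^ S m / INR (fact (S m))); [now apply E1_neg_error|].
  apply Rle_lt_trans with (1 / INR (fact m)).
  - apply Rmult_le_compat; [apply pow_le; lra | left; apply Rinv_0_lt_compat; lra | lra |].
    apply Rinv_le_contravar; lra.
  - apply Rmult_lt_compat_r; [apply Rinv_0_lt_compat|]; lra.
Qed.

Theorem mainTheorem4 (r n j : nat) (hr : (1 <= r)%nat) (hn : (1 <= n)%nat) :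
  ((j <= r)%nat ->
    Rabs (omega n r j - exp (- / INR n) / (INR (fact j) * INR n ^ j))
      < (1 + 2 ^ (r - j)) / (INR (fact j) * INR n ^ j * INR (fact (r - j))))
  /\ ((r < j)%nat -> omega n r j = 0).
Proof.
  pose proof (ssrbool.introT ssrnat.leP hn) as n_gt0.
  split; intros hj.
  - rewrite (omega_E1 n r n_gt0 j (ssrbool.introT ssrnat.leP hj)).
    change (ssrnat.subn r j) with (r - j)%nat.
    assert (Hn : 1 <= INR n) by (apply (le_INR 1); exact hn).
    assert (Hx : 0 <= / INR n <= 1).
    { split; [left; apply Rinv_0_lt_compat; lra |].
      rewrite <- Rinv_1; apply Rinv_le_contravar; lra. }
    assert (HD : 0 < INR (fact j) * INR n ^ j)
      by (apply Rmult_lt_0_compat; [apply INR_fact_lt_0 | apply pow_lt; lra]).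
    assert (Hf : 0 < INR (fact (r - j))) by apply INR_fact_lt_0.
    set (D := INR (fact j) * INR n ^ j) in *.
    replace (E1 (- / INR n) (r - j) / D - exp (- / INR n) / D)
      with ((E1 (- / INR n) (r - j) - exp (- / INR n)) * / D) by (field; lra).
    replace ((1 + 2 ^ (r - j)) / (D * INR (fact (r - j))))
      with ((1 + 2 ^ (r - j)) / INR (fact (r - j)) * / D) by (field; lra).
    rewrite Rabs_mult, (Rabs_pos_eq (/ D)) by (left; apply Rinv_0_lt_compat; lra).
    apply Rmult_lt_compat_r; [apply Rinv_0_lt_compat; lra |].
    now apply E1_neg_error_lt.
  - exact (omega_eq0 n r n_gt0 j (ssrbool.introT ssrnat.leP hj)).
Qed.
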